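(* Let $\mathcal{X}$ be a finite set with $|\mathcal{X}|=r\geq 2$, let $P_X$ be a probability mass function on $\mathcal{X}$ with $P_X(x)>0$ for all $x\in\mathcal{X}$, let $\mathcal{Z}=\{0,1,\ldots,k-1\}$ with $2\leq k\leq r$, let $f:\mathcal{X}\to\mathcal{Z}$ be a given mapping, and fix an integer list size $l$ with $1\leq l<r$. Let $\pi^{(l)}(\rho)$ denote list $\rho$-privacy and $\Lambda_\rho$ the set defined in the context. Then: (i) For $0\leq\rho\leq 1/k$, $\pi^{(l)}(\rho)=1-P_X(L_l^* )$. (ii) For $\rho=1$, $\pi^{(l)}(1)=1-\sum_{i\in\mathcal{Z}} P_X\big([f^{-1}(i)]_{\min\{l,|f^{-1}(i)|\}}\big)$. (iii) For $0\leq\rho\leq 1$, $$\pi^{(l)}(\rho)\leq \pi_u^{(l)}(\rho):=1-\Big[P_X(\Lambda_\rho)+\rho\sum_{i\in\mathcal{Z}}P_X\big([f^{-1}(i)\setminus\Lambda_\rho]_{\min\{l-|\Lambda_\rho|,\,|f^{-1}(i)\setminus\Lambda_\rho|\}}\big)\Big].$$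
   Context: Notation: $f^{-1}(i)=\{x\in\mathcal{X}: f(x)=i\}$. For $A\subseteq\mathcal{X}$ and $0\leq t\leq|A|$, $[A]_t$ denotes a set of $t$ largest $P_X$-probability elements of $A$ (ties broken arbitrarily), with $[A]_0=\emptyset$; $L_t^*=[\mathcal{X}]_t$. For a set $S$, $P_X(S)=\sum_{x\in S}P_X(x)$. A $\rho$-recoverable query response ($\rho$-QR), for $0\leq\rho\leq 1$, is a stochastic matrix $W:\mathcal{X}\to\mathcal{Z}$ (i.e. $W(i|x)\geq 0$, $\sum_{i\in\mathcal{Z}}W(i|x)=1$) with $W(f(x)|x)\geq\rho$ for all $x\in\mathcal{X}$; equivalently a $\mathcal{Z}$-valued random variable $F(X)$ with $P(F(X)=i\mid X=x)=W(i|x)$, where $X\sim P_X$. Let $\mathcal{L}_l$ be the set of all $l$-element subsets of $\mathcal{X}$. The list privacy of a $\rho$-QR $W$ is $\pi^{(l)}_\rho(W)=\min_{g}P(X\notin g(F(X)))$, the minimum over all maps $g:\mathcal{Z}\to\mathcal{L}_l$; equivalently $\pi^{(l)}_\rho(W)=1-\sum_{i\in\mathcal{Z}}\max_{L\in\mathcal{L}_l}\sum_{x\in L}P_X(x)W(i|x)$. List $\rho$-privacy is $\pi^{(l)}(\rho)=\max\{\pi^{(l)}_\rho(W): W \text{ a } \rho\text{-QR}\}$. For $0\leq\rho\leq1$, $\Lambda_\rho$ denotes a maximizer (not necessarily unique) over subsets $\Lambda\subset\mathcal{X}$ with $0\leq|\Lambda|\leq l$ of $$P_X(\Lambda)+\rho\sum_{i\in\mathcal{Z}}P_X\big([f^{-1}(i)\setminus\Lambda]_{\min\{l-|\Lambda|,\,|f^{-1}(i)\setminus\Lambda|\}}\big).$$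 *)

From mathcomp Require Import all_boot all_order all_algebra.
From mathcomp Require Import reals.
Set Implicit Arguments. Unset Strict Implicit. Unset Printing Implicit Defensive.
Import Order.TTheory GRing.Theory Num.Theory.
Local Open Scope ring_scope.

Section Defs.
Variables (R : realType) (X : finType) (P : X -> R).

Definition PX (S : {set X}) : R := \sum_(x in S) P x.

Definition is_top (A : {set X}) (t : nat) (S : {set X}) : bool :=
  [&& S \subset A, #|S| == t &
      [forall x in S, forall y in A :\: S, P y <= P x]].

(* [A]_t : some such set, ties broken arbitrarily (via pick) *)
Definition top_set (A : {set X}) (t : nat) : {set X} :=
  odflt set0 [pick S : {set X} | is_top A t S].

Definition fpre (k : nat) (f : X -> 'I_k) (i : 'I_k) : {set X} :=
  [set x | f x == i].

Definition is_QR (k : nat) (f : X -> 'I_k) (rho : R) (W : X -> 'I_k -> R) : Prop :=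
  (forall x i, 0 <= W x i) /\ (forall x, \sum_(i < k) W x i = 1) /\
  (forall x, rho <= W x (f x)).

Definition list_priv (k l : nat) (W : X -> 'I_k -> R) : R :=
  1 - \sum_(i < k) \big[Num.max/0]_(L : {set X} | #|L| == l)
                      \sum_(x in L) P x * W x i.

Definition is_list_rho_privacy (k l : nat) (f : X -> 'I_k) (rho v : R) : Prop :=
  (exists W, is_QR f rho W /\ list_priv l W = v) /\
  (forall W, is_QR f rho W -> list_priv l W <= v).

Definition Lam_obj (k l : nat) (f : X -> 'I_k) (rho : R) (Lam : {set X}) : R :=
  PX Lam + rho * \sum_(i < k)
     PX (top_set (fpre f i :\: Lam) (minn (l - #|Lam|) #|fpre f i :\: Lam|)).

Definition is_Lambda_rho (k l : nat) (f : X -> 'I_k) (rho : R) (Lam : {set X}) : Prop :=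
  (#|Lam| <= l)%N /\
  (forall L' : {set X}, (#|L'| <= l)%N -> Lam_obj l f rho L' <= Lam_obj l f rho Lam).

End Defs.

(* The adversary answering i with a list L of size l gains
   \sum_(x in L) P x W(i|x).  For any Lam with |Lam| <= l it may take L
   containing Lam and [f^-1(i) \ Lam]_t, t = min(l - |Lam|, |f^-1(i) \ Lam|);
   as the rows of W sum to 1 on Lam and W(i|x) >= rho on f^-1(i), summing over i
   gives (iii) for every such Lam, not only for the maximizer Lambda_rho.
   Lam = L_l^* (where the rho-term vanishes) and Lam = set0 with rho = 1 give
   the upper bounds in (i) and (ii); they are attained by the uniform response
   W = 1/k and by the deterministic response F(X) = f(X), because a set of at
   most t elements of A has mass at most P_X([A]_t). *)

From mathcomp Require Import all_boot all_order all_algebra.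
From mathcomp Require Import reals.
From mathcomp Require Import zify.
Import Order.TTheory GRing.Theory Num.Theory.
Set Implicit Arguments. Unset Strict Implicit. Unset Printing Implicit Defensive.
Local Open Scope ring_scope.

Lemma ler_sum_subset (R : numDomainType) (T : finType) (g : T -> R) (A B : {set T}) :
  (forall x, 0 <= g x) -> A \subset B -> \sum_(x in A) g x <= \sum_(x in B) g x.
Proof.
move=> g_ge0 AB; rewrite [leRHS](big_setID A) /= (setIidPr AB) lerDl.
exact: sumr_ge0.
Qed.

Lemma extend_subset_card (T : finType) (B A : {set T}) t :
  B \subset A -> (#|B| <= t <= #|A|)%N ->
  exists S : {set T}, [/\ B \subset S, S \subset A & #|S| = t].
Proof.
move=> BA /andP[Bt tA].
have : (t - #|B| <= #|A :\: B|)%N by rewrite cardsDS //; lia.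
case/card_geqP => s [s_uniq s_size sAB].
have s_card : #|[set x in s]| = size s by rewrite cardsE; exact/card_uniqP.
exists (B :|: [set x in s]); split; first exact: subsetUl.
  rewrite subUset BA; apply/subsetP => x; rewrite inE => /sAB.
  by rewrite inE => /andP[].
have disj : B :&: [set x in s] = set0.
  apply/setP => x; rewrite !inE; apply/negP => /andP[xB /sAB].
  by rewrite inE xB.
by rewrite cardsU disj cards0 s_card s_size; lia.
Qed.

Section TopSets.
Variables (R : realType) (X : finType) (P : X -> R).

Lemma PX_swap (S : {set X}) x y : x \in S -> y \notin S ->
  PX P (y |: (S :\ x)) = PX P S - P x + P y.
Proof.
move=> xS yS; rewrite /PX big_setU1 /=; last by rewrite !inE negb_and yS orbT.
by rewrite [in RHS](big_setD1 x xS) /= (addrC (P x)) addrK addrC.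
Qed.

Lemma card_swap (S : {set X}) x y : x \in S -> y \notin S ->
  #|y |: (S :\ x)| = #|S|.
Proof.
move=> xS yS; rewrite cardsU1 !inE negb_and yS orbT (cardsD1 x S) xS.
by rewrite add1n.
Qed.

Lemma top_setP (A : {set X}) t : (t <= #|A|)%N -> is_top P A t (top_set P A t).
Proof.
move=> tA; rewrite /top_set; case: pickP => //= no_top; exfalso.
pose admissible (S : {set X}) := (S \subset A) && (#|S| == t).
have [S0 [_ S0A S0t]] : exists S : {set X}, [/\ set0 \subset S, S \subset A & #|S| = t].
  by apply: extend_subset_card; rewrite ?sub0set ?cards0.
have adm0 : admissible S0 by rewrite /admissible S0A S0t eqxx.
case: (arg_maxP (PX P) adm0) => S /andP[SA /eqP St] Smax.
move/negbT/negP: (no_top S); apply; rewrite /is_top SA St eqxx /=.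
apply/forall_inP => x xS; apply/forall_inP => y; rewrite inE => /andP[yS yA].
rewrite leNgt; apply/negP => Pxy.
have adm_swap : admissible (y |: (S :\ x)).
  rewrite /admissible card_swap // St eqxx andbT subUset sub1set yA.
  exact: subset_trans (subsetDl _ _) SA.
have /= := Smax _ adm_swap; rewrite PX_swap // leNgt => /negP; apply.
by rewrite -addrA ltrDl addrC subr_gt0.
Qed.

Lemma top_set0 (A : {set X}) : top_set P A 0 = set0.
Proof. by have /and3P[_ /eqP/cards0_eq -> _] := top_setP (leq0n #|A|). Qed.

Hypothesis P_ge0 : forall x, 0 <= P x.

Lemma PX_ge0 (S : {set X}) : 0 <= PX P S.
Proof. exact: sumr_ge0. Qed.

Lemma PX_le_dominated (L S : {set X}) : (#|L| <= #|S|)%N ->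
  (forall x y, x \in S -> y \in L -> P y <= P x) -> PX P L <= PX P S.
Proof.
move=> LS dom; have [S0|S_gt0] := posnP #|S|.
  have /cards0_eq -> : #|L| = 0%N by lia.
  by rewrite [PX _ _]big_set0 PX_ge0.
have cross : #|S|%:R * PX P L <= #|L|%:R * PX P S.
  have -> : #|S|%:R * PX P L = \sum_(x in S) \sum_(y in L) P y.
    by rewrite sumr_const mulr_natl.
  have -> : #|L|%:R * PX P S = \sum_(x in S) \sum_(y in L) P x.
    by rewrite exchange_big /= sumr_const mulr_natl.
  by apply: ler_sum => x xS; apply: ler_sum => y yL; exact: dom.
rewrite -(@ler_pM2l _ #|S|%:R) ?ltr0n // (le_trans cross) //.
by rewrite ler_wpM2r ?PX_ge0 ?ler_nat.
Qed.

Lemma top_set_max (A S L : {set X}) t : is_top P A t S ->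
  L \subset A -> (#|L| <= t)%N -> PX P L <= PX P S.
Proof.
case/and3P => SA /eqP St /forall_inP S_top LA Lt.
rewrite /PX (big_setID S) [leRHS](big_setID L) /= setIC lerD2l.
apply: PX_le_dominated => [|x y].
  by move: (cardsID S L) (cardsID L S); rewrite setIC; lia.
rewrite !inE => /andP[_ xS] /andP[yS yL].
by move/forall_inP: (S_top x xS); apply; rewrite inE yS (subsetP LA).
Qed.

Lemma PX_top_set_max (A L : {set X}) t : L \subset A -> (#|L| <= t <= #|A|)%N ->
  PX P L <= PX P (top_set P A t).
Proof. by move=> LA /andP[Lt tA]; exact: top_set_max (top_setP tA) LA Lt. Qed.

End TopSets.

Section ListPrivacy.
Variables (R : realType) (X : finType) (P : X -> R) (k l : nat) (f : X -> 'I_k).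
Hypotheses (P_ge0 : forall x, 0 <= P x) (l_le_X : (l <= #|X|)%N).

Definition best_list_mass (W : X -> 'I_k -> R) (i : 'I_k) : R :=
  \big[Num.max/0]_(L : {set X} | #|L| == l) \sum_(x in L) P x * W x i.

Lemma list_privE W : list_priv P l W = 1 - \sum_(i < k) best_list_mass W i.
Proof. by []. Qed.

Lemma list_mass_le_best W i (L : {set X}) : (forall x, 0 <= W x i) ->
  (#|L| <= l)%N -> \sum_(x in L) P x * W x i <= best_list_mass W i.
Proof.
move=> W_ge0 Ll.
have [L' [LL' _ L'l]] : exists L' : {set X}, [/\ L \subset L', L' \subset setT & #|L'| = l].
  by apply: extend_subset_card; rewrite ?subsetT ?Ll ?cardsT.
apply: le_trans (ler_sum_subset _ LL') _ => [x|]; first exact: mulr_ge0.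
by apply: le_bigmax_cond; rewrite L'l.
Qed.

Lemma best_list_mass_le W i c : 0 <= c ->
  (forall L : {set X}, #|L| = l -> \sum_(x in L) P x * W x i <= c) ->
  best_list_mass W i <= c.
Proof. by move=> c_ge0 Lc; apply: bigmax_le => // L /eqP; exact: Lc. Qed.

Lemma Lam_top_mass_le_best rho (Lam : {set X}) W i : is_QR f rho W ->
  (#|Lam| <= l)%N ->
  \sum_(x in Lam) P x * W x i
    + rho * PX P (top_set P (fpre f i :\: Lam) (minn (l - #|Lam|) #|fpre f i :\: Lam|))
  <= best_list_mass W i.
Proof.
move=> [W_ge0 [_ W_rho]] Laml.
set A := fpre f i :\: Lam; set T := top_set P A _.
have /and3P[TA /eqP Tcard _] : is_top P A (minn (l - #|Lam|) #|A|) T.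
  exact/top_setP/geq_minr.
have disj : [disjoint Lam & T].
  by rewrite disjoint_sym disjoints_subset (subset_trans TA) ?subsetDr.
have rhoT : rho * PX P T <= \sum_(x in T) P x * W x i.
  rewrite /PX mulr_sumr; apply: ler_sum => x xT; rewrite mulrC ler_wpM2l //.
  by move/subsetP/(_ x xT): TA; rewrite !inE => /andP[_ /eqP <-].
have LamT : \sum_(x in Lam :|: T) P x * W x i
           = \sum_(x in Lam) P x * W x i + \sum_(x in T) P x * W x i.
  by rewrite -bigU //; apply: eq_bigl => x; rewrite !inE.
have LamT_card : (#|Lam :|: T| <= l)%N by rewrite cardsU Tcard; lia.
apply: le_trans (list_mass_le_best (fun x => W_ge0 x i) LamT_card).
by rewrite LamT lerD2l.
Qed.

Lemma list_priv_le_Lam_obj rho (Lam : {set X}) W : is_QR f rho W ->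
  (#|Lam| <= l)%N -> list_priv P l W <= 1 - Lam_obj P l f rho Lam.
Proof.
move=> W_QR Laml; have [_ [W_sum1 _]] := W_QR.
rewrite list_privE /Lam_obj lerD2l lerN2.
have -> : PX P Lam = \sum_(i < k) \sum_(x in Lam) P x * W x i.
  by rewrite exchange_big; apply: eq_bigr => x _; rewrite -mulr_sumr W_sum1 mulr1.
rewrite mulr_sumr -big_split /=; apply: ler_sum => i _.
exact: Lam_top_mass_le_best.
Qed.

Lemma Lam_obj_card rho (Lam : {set X}) : #|Lam| = l -> Lam_obj P l f rho Lam = PX P Lam.
Proof.
move=> Laml; rewrite /Lam_obj Laml subnn big1 ?mulr0 ?addr0 // => i _.
by rewrite min0n top_set0 [PX _ _]big_set0.
Qed.

Lemma Lam_obj_set0 rho : Lam_obj P l f rho set0 =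
  rho * \sum_(i < k) PX P (top_set P (fpre f i) (minn l #|fpre f i|)).
Proof.
rewrite /Lam_obj cards0 subn0 [PX _ set0]big_set0 add0r.
by congr (_ * _); apply: eq_bigr => i _; rewrite setD0.
Qed.

Lemma is_list_rho_privacy_intro rho v W0 : is_QR f rho W0 ->
  v <= list_priv P l W0 -> (forall W, is_QR f rho W -> list_priv P l W <= v) ->
  is_list_rho_privacy P l f rho v.
Proof.
move=> W0_QR v_le le_v; split=> //; exists W0; split=> //.
by apply/le_anti; rewrite v_le le_v.
Qed.

Definition deterministic_response : X -> 'I_k -> R := fun x i => (f x == i)%:R.

Lemma deterministic_response_QR : is_QR f 1 deterministic_response.
Proof.
split=> [x i|]; first exact: ler0n.
split=> [x|x]; last by rewrite /deterministic_response eqxx.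
rewrite (bigD1 (f x)) //= /deterministic_response eqxx big1 ?addr0 // => i fx_i.
by rewrite eq_sym (negPf fx_i).
Qed.

Lemma list_priv_deterministic_ge :
  1 - \sum_(i < k) PX P (top_set P (fpre f i) (minn l #|fpre f i|))
  <= list_priv P l deterministic_response.
Proof.
rewrite list_privE lerD2l lerN2; apply: ler_sum => i _.
apply: best_list_mass_le => [|L Ll]; first exact: PX_ge0.
have -> : \sum_(x in L) P x * deterministic_response x i = PX P (L :&: fpre f i).
  rewrite /PX big_mkcond [RHS]big_mkcond; apply: eq_bigr => x _.
  by rewrite !inE /deterministic_response; case: (x \in L); case: (f x == i);
     rewrite ?mulr1 ?mulr0.
apply: (PX_top_set_max P_ge0); first exact: subsetIr.
by rewrite geq_minr andbT leq_min -Ll !subset_leq_card ?subsetIl ?subsetIr.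
Qed.

Definition uniform_response : X -> 'I_k -> R := fun _ _ => k%:R^-1.

Hypothesis k_gt0 : (0 < k)%N.

Lemma uniform_response_QR rho : rho <= k%:R^-1 -> is_QR f rho uniform_response.
Proof.
move=> rho_le; split=> [x i|]; first by rewrite invr_ge0 ler0n.
split=> // x; rewrite sumr_const card_ord -[_ *+ k]mulr_natr mulVf //.
by rewrite pnatr_eq0 -lt0n.
Qed.

Lemma list_priv_uniform_ge :
  1 - PX P (top_set P [set: X] l) <= list_priv P l uniform_response.
Proof.
set T := top_set P _ _; rewrite list_privE lerD2l lerN2.
have best_le i : best_list_mass uniform_response i <= PX P T * k%:R^-1.
  apply: best_list_mass_le => [|L Ll].
    by rewrite mulr_ge0 ?(PX_ge0 P_ge0) ?invr_ge0 ?ler0n.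
  rewrite -mulr_suml ler_wpM2r ?invr_ge0 ?ler0n //.
  by apply: (PX_top_set_max P_ge0); rewrite ?subsetT // Ll leqnn cardsT.
apply: le_trans (ler_sum _ (fun i _ => best_le i)) _.
by rewrite sumr_const card_ord -[_ *+ k]mulr_natr mulfVK // pnatr_eq0 -lt0n.
Qed.

End ListPrivacy.

Theorem theorem1 (R : realType) (X : finType) (P : X -> R) (k l : nat)
    (f : X -> 'I_k)
    (hr : (2 <= #|X|)%N)
    (hPpos : forall x, 0 < P x) (hPsum : \sum_(x : X) P x = 1)
    (hk : (2 <= k)%N) (hkr : (k <= #|X|)%N)
    (hl1 : (1 <= l)%N) (hlr : (l < #|X|)%N) :
  (* (i) *)
  (forall rho : R, 0 <= rho -> rho <= 1 / k%:R ->
     is_list_rho_privacy P l f rho (1 - PX P (top_set P [set: X] l)))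
  /\
  (* (ii) *)
  is_list_rho_privacy P l f 1
    (1 - \sum_(i < k) PX P (top_set P (fpre f i) (minn l #|fpre f i|)))
  /\
  (* (iii) *)
  (forall (rho : R) (Lam : {set X}), 0 <= rho -> rho <= 1 ->
     is_Lambda_rho P l f rho Lam ->
     forall W : X -> 'I_k -> R, is_QR f rho W ->
       list_priv P l W <= 1 - Lam_obj P l f rho Lam).
Proof.
have P_ge0 x : 0 <= P x by exact: ltW.
have l_le_X : (l <= #|X|)%N by exact: ltnW.
have k_gt0 : (0 < k)%N by exact: ltnW.
have priv_le := list_priv_le_Lam_obj P_ge0 l_le_X.
split; [|split].
- move=> rho _ rho_le; rewrite div1r in rho_le.
  have /and3P[_ /eqP Tcard _] : is_top P [set: X] l (top_set P [set: X] l).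
    by apply: top_setP; rewrite cardsT.
  apply: (is_list_rho_privacy_intro (uniform_response_QR f k_gt0 rho_le)).
    exact: list_priv_uniform_ge.
  move=> W W_QR; rewrite -(Lam_obj_card P f rho Tcard).
  by apply: priv_le W_QR _; rewrite Tcard.
- apply: (is_list_rho_privacy_intro (deterministic_response_QR R f)).
    exact: list_priv_deterministic_ge.
  move=> W W_QR; rewrite -[X in 1 - X]mul1r -Lam_obj_set0.
  by apply: priv_le W_QR _; rewrite cards0.
- by move=> rho Lam _ _ [Lam_le _] W W_QR; exact: priv_le.
Qed.
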